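(* Let $R$ be a ring and $a\in R$. Then $a$ is feckly clean if and only if there exists an element $e\in R$ such that $$V(a-1)\subseteq V(e)\subseteq \operatorname{Max}(R)\setminus V(a)\quad\text{and}\quad eR(1-e)\subseteq J(R).$$
   Context: Rings are associative with identity, not necessarily commutative; $J(R)$ is the Jacobson radical. An element $u\in R$ is full if $RuR=R$. An element $a\in R$ is feckly clean if there exist $e\in R$ and a full element $u\in R$ with $a=e+u$ and $eR(1-e)\subseteq J(R)$. $\operatorname{Max}(R)$ is the set of all maximal (two-sided) ideals of $R$. For an ideal $I$, $V(I)=\{P\in\operatorname{Max}(R): I\subseteq P\}$, and for $a\in R$, $V(a)=V(RaR)$. *)

(* Rings: pzRingType (associative, unital, possibly non-commutative,
   possibly the zero ring). Subsets of R are predicates R -> Prop. *)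
From HB Require Import structures.
From mathcomp Require Import all_boot all_order all_algebra.
Set Implicit Arguments. Unset Strict Implicit. Unset Printing Implicit Defensive.
Import GRing.Theory.
Local Open Scope ring_scope.

Section Defs.
Variable R : pzRingType.

Definition left_ideal (I : R -> Prop) : Prop :=
  I 0 /\ (forall x y, I x -> I y -> I (x + y)) /\ (forall r x, I x -> I (r * x)).

Definition ideal (I : R -> Prop) : Prop :=
  I 0 /\ (forall x y, I x -> I y -> I (x + y)) /\
  (forall r x, I x -> I (r * x)) /\ (forall r x, I x -> I (x * r)).

Definition max_left_ideal (M : R -> Prop) : Prop :=
  left_ideal M /\ ~ M 1 /\
  (forall I : R -> Prop, left_ideal I -> (forall x, M x -> I x) ->
     (forall x, I x <-> M x) \/ I 1).

Definition jacobson (x : R) : Prop :=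
  forall M : R -> Prop, max_left_ideal M -> M x.

Definition max_ideal (P : R -> Prop) : Prop :=
  ideal P /\ ~ P 1 /\
  (forall I : R -> Prop, ideal I -> (forall x, P x -> I x) ->
     (forall x, I x <-> P x) \/ I 1).

Definition RaR (a : R) (x : R) : Prop :=
  exists s : seq (R * R), x = \sum_(p <- s) p.1 * a * p.2.

Definition full (u : R) : Prop := forall x, RaR u x.

Definition corner_in_J (e : R) : Prop := forall r, jacobson (e * r * (1 - e)).

Definition feckly_clean (a : R) : Prop :=
  exists e u : R, a = e + u /\ full u /\ corner_in_J e.

Definition V (I : R -> Prop) (P : R -> Prop) : Prop :=
  max_ideal P /\ (forall x, I x -> P x).

Definition Velt (a : R) : (R -> Prop) -> Prop := V (RaR a).

End Defs.

(* A maximal ideal P contains J(R): the largest two-sided ideal inside a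
   maximal left ideal containing P is P itself, and it contains J(R).  If
   eR(1-e) is in J(R), the ideal {y | yR(1-e) in P} contains P and e, so
   e or 1-e lies in P.  Hence a maximal ideal contains u = a - e iff it
   contains e and a, or 1-e and a-1; and u is full iff it lies in no maximal
   ideal, which is exactly the two inclusions V(a-1) in V(e), V(e) disjoint
   from V(a). *)

From HB Require Import structures.
From mathcomp Require Import all_boot all_order all_algebra.
From mathcomp Require Import boolp classical_sets.
Import GRing.Theory.
Set Implicit Arguments. Unset Strict Implicit. Unset Printing Implicit Defensive.
Local Open Scope ring_scope.
Local Open Scope classical_set_scope.

Definition chain_closed T (C : set (set T)) :=
  forall F : set (set T), F `<=` C -> F !=set0 -> total_on F subset ->
    C (\bigcup_(X in F) X).

Lemma Zorn_proper T (C : set (set T)) (I : set T) (one : T) :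
  chain_closed C -> C I -> ~ I one ->
  exists M, [/\ C M, I `<=` M, ~ M one &
    forall J, C J -> M `<=` J -> J = M \/ J one].
Proof.
(* Joining I to every candidate makes the empty chain harmless. *)
move=> Cch CI nI1; pose P X := C (I `|` X) /\ ~ (I `|` X) one.
have [|A [[CA nA1] Amax]] := Zorn_bigcup (P := P).
  move=> F FP Ftot; have [F0|/set0P F0] := eqVneq F set0.
    by rewrite /P F0 bigcup_set0 setU0.
  rewrite /P -bigcupUr // -(bigcup_image F (setU I) id); split.
    apply: Cch; first by move=> _ [X FX <-]; case: (FP X FX).
      by case: F0 => X FX; exists (I `|` X), X.
    move=> _ _ [X FX <-] [Y FY <-].
    by case: (Ftot X Y FX FY) => XY; [left|right]; apply: setUS.
  by case=> _ [X FX <-]; case: (FP X FX).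
exists (I `|` A); split=> // J CJ AJ.
have [J1|nJ1] := pselect (J one); first by right.
left; apply/seteqP; split=> //; apply: contrapT => nJA.
have PJ : P J by rewrite /P setUidr // => x Ix; apply: AJ; left.
apply: Amax PJ; split; first by move=> x Ax; apply: AJ; right.
by move=> JA; apply: nJA => x Jx; right; apply: JA.
Qed.

Lemma bigcup_chain_closed2 T (F : set (set T)) (f : T -> T -> T) :
  total_on F subset -> (forall X, F X -> forall x y, X x -> X y -> X (f x y)) ->
  forall x y, (\bigcup_(X in F) X) x -> (\bigcup_(X in F) X) y ->
    (\bigcup_(X in F) X) (f x y).
Proof.
move=> Ftot Ff x y [X FX Xx] [Y FY Yy].
have [XY|YX] := Ftot X Y FX FY.
- by exists Y => //; apply: Ff => //; apply: XY.
- by exists X => //; apply: Ff => //; apply: YX.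
Qed.

Section Ideals.
Variable R : pzRingType.
Implicit Types (a e u x y : R) (I M P : set R).

Lemma ideal_left_ideal P : ideal P -> left_ideal P.
Proof. by case=> P0 [PD [PL _]]. Qed.

Lemma idealB P x y : ideal P -> P x -> P y -> P (x - y).
Proof. by case=> _ [PD [PL _]] Px Py; rewrite -mulN1r; apply/PD/PL. Qed.

Lemma chain_closed_left_ideal : chain_closed (@left_ideal R).
Proof.
move=> F FL [X0 FX0] Ftot; split; [|split].
- by exists X0 => //; case: (FL X0 FX0).
- by apply: bigcup_chain_closed2 => // X /FL [_ []].
- move=> r x [X FX Xx]; exists X => //; case: (FL X FX) => _ [_]; exact.
Qed.

Lemma chain_closed_ideal : chain_closed (@ideal R).
Proof.
move=> F FI F0 Ftot.
have [I0 [ID IL]] := chain_closed_left_ideal (fun X FX => ideal_left_ideal (FI X FX)) F0 Ftot.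
split=> //; split=> //; split=> // r x [X FX Xx].
by exists X => //; case: (FI X FX) => _ [_ [_]]; exact.
Qed.

Lemma exists_max_left_ideal I : left_ideal I -> ~ I 1 ->
  exists2 M, max_left_ideal M & I `<=` M.
Proof.
move=> LI nI1; have [M [LM IM nM1 Mmax]] := Zorn_proper chain_closed_left_ideal LI nI1.
exists M => //; split=> //; split=> // J LJ MJ.
by case: (Mmax J LJ MJ) => [->|]; [left|right].
Qed.

Lemma exists_max_ideal I : ideal I -> ~ I 1 -> exists2 M, max_ideal M & I `<=` M.
Proof.
move=> II nI1; have [M [IM IsubM nM1 Mmax]] := Zorn_proper chain_closed_ideal II nI1.
exists M => //; split=> //; split=> // J IJ MJ.
by case: (Mmax J IJ MJ) => [->|]; [left|right].
Qed.

Lemma RaR_ideal a : ideal (RaR a).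
Proof.
split; [|split; [|split]].
- by exists [::]; rewrite big_nil.
- by move=> x y [s ->] [t ->]; exists (s ++ t); rewrite big_cat.
- move=> r x [s ->]; exists [seq (r * p.1, p.2) | p <- s].
  by rewrite big_map big_distrr /=; apply: eq_bigr => p _; rewrite !mulrA.
- move=> r x [s ->]; exists [seq (p.1, p.2 * r) | p <- s].
  by rewrite big_map big_distrl /=; apply: eq_bigr => p _; rewrite !mulrA.
Qed.

Lemma RaR_id a : RaR a a.
Proof. by exists [:: (1, 1)]; rewrite big_seq1 mul1r mulr1. Qed.

Lemma RaR_min P a : ideal P -> P a -> RaR a `<=` P.
Proof.
case=> P0 [PD [PL PR]] Pa x [s ->]; elim: s => [|p s IH].
  by rewrite big_nil.
by rewrite big_cons; apply: PD => //; apply/PR/PL.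
Qed.

Lemma VeltE a P : Velt a P <-> max_ideal P /\ P a.
Proof.
split=> [[mP aP]|[mP Pa]]; first by split=> //; apply/aP/RaR_id.
by split=> //; apply: RaR_min => //; case: mP.
Qed.

Lemma full_no_max_ideal u : full u <-> forall P, max_ideal P -> ~ P u.
Proof.
split=> [uR P [IP [nP1 _]] Pu|noP x]; first exact/nP1/(RaR_min IP Pu).
have [u1|nu1] := pselect (RaR u 1).
  by rewrite -(mulr1 x); case: (RaR_ideal u) => _ [_ [RL _]]; apply: RL.
have [P mP uP] := exists_max_ideal (RaR_ideal u) nu1.
by case: (noP P mP); apply/uP/RaR_id.
Qed.

Lemma max_left_ideal_comaximal M b : max_left_ideal M -> ~ M b ->
  exists y m, M m /\ y * b + m = 1.
Proof.
case=> [[M0 [MD ML]] [_ Mmax]] nMb.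
pose L z := exists y m, M m /\ y * b + m = z.
have LL : left_ideal L.
  split; [|split].
  - by exists 0, 0; rewrite mul0r addr0.
  - move=> _ _ [y1 [m1 [Mm1 <-]]] [y2 [m2 [Mm2 <-]]].
    by exists (y1 + y2), (m1 + m2); rewrite mulrDl addrACA; split=> //; apply: MD.
  - move=> r _ [y [m [Mm <-]]]; exists (r * y), (r * m).
    by rewrite mulrDr mulrA; split=> //; apply: ML.
have ML' : M `<=` L by move=> z Mz; exists 0, z; rewrite mul0r add0r.
case: (Mmax L LL ML') => [LM|//].
by case: nMb; apply/LM; exists 1, 0; rewrite mul1r addr0.
Qed.

Lemma jacobson_left_unit x y : jacobson x -> exists z, z * (1 - y * x) = 1.
Proof.
move=> Jx; apply: contrapT => noz.
pose K z := exists w, w * (1 - y * x) = z.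
have LK : left_ideal K.
  split; [|split].
  - by exists 0; rewrite mul0r.
  - by move=> _ _ [w1 <-] [w2 <-]; exists (w1 + w2); rewrite mulrDl.
  - by move=> r _ [w <-]; exists (r * w); rewrite mulrA.
have [|M mM KM] := exists_max_left_ideal LK; first by case=> w w1; apply: noz; exists w.
have Mx := Jx M mM; case: mM => [[_ [MD ML]] [nM1 _]]; apply: nM1.
rewrite -(subrK (y * x) 1); apply: MD; last exact: ML.
by apply: KM; exists 1; rewrite mul1r.
Qed.

Definition left_core M : set R := fun y => forall r, M (y * r).

Lemma left_core_ideal M : left_ideal M -> ideal (left_core M).
Proof.
case=> M0 [MD ML]; split; [|split; [|split]].
- by move=> r; rewrite mul0r.
- by move=> a b Ma Mb r; rewrite mulrDl; apply: MD.
- by move=> s a Ma r; rewrite -mulrA; apply: ML.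
- by move=> s a Ma r; rewrite -mulrA; apply: Ma.
Qed.

Lemma jacobson_left_core M x : max_left_ideal M -> jacobson x -> left_core M x.
Proof.
move=> mM Jx r; apply: contrapT => nMxr.
have [y [m [Mm xr1]]] := max_left_ideal_comaximal mM nMxr.
have [z z_inv] := jacobson_left_unit (r * y) Jx.
case: mM => [[_ [_ ML]] _]; apply/nMxr/ML.
suff -> : r = z * (r * m) by apply/ML/ML.
have -> : m = 1 - y * (x * r) by rewrite -xr1 [_ + m]addrC addrK.
by rewrite mulrBr mulr1 !mulrA -[X in X - _]mul1r -mulrBl mulrA z_inv mul1r.
Qed.

Lemma max_ideal_jacobson P x : max_ideal P -> jacobson x -> P x.
Proof.
case=> IP [nP1 Pmax] Jx.
have [M mM PM] := exists_max_left_ideal (ideal_left_ideal IP) nP1.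
have P_core : P `<=` left_core M.
  by move=> y Py r; apply: PM; case: IP => _ [_ [_ PR]]; apply: PR.
case: (Pmax _ (left_core_ideal mM.1) P_core) => [coreP|core1].
  by apply/coreP; apply: jacobson_left_core.
by case: mM => _ [nM1 _]; case: nM1; have := core1 1; rewrite mulr1.
Qed.

Lemma max_ideal_corner P e : max_ideal P -> corner_in_J e -> P e \/ P (1 - e).
Proof.
move=> mP eJ; case: (mP) => IP [_ Pmax]; case: (IP) => P0 [PD [PL PR]].
pose A y := forall r, P (y * r * (1 - e)).
have IA : ideal A.
  split; [|split; [|split]].
  - by move=> r; rewrite !mul0r.
  - by move=> a b Aa Ab r; rewrite !mulrDl; apply: PD.
  - by move=> s a Aa r; rewrite -!mulrA; apply: PL; rewrite !mulrA.
  - by move=> s a Aa r; rewrite -(mulrA a); apply: Aa.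
have PA : P `<=` A by move=> y Py r; apply/PR/PR.
case: (Pmax A IA PA) => [AP|A1]; last by right; have := A1 1; rewrite !mul1r.
by left; apply/AP => r; apply: max_ideal_jacobson.
Qed.
End Ideals.

Lemma feckly_cleanE (R : pzRingType) (a : R) :
  feckly_clean a <-> exists2 e, full (a - e) & corner_in_J e.
Proof.
split=> [[e [u [-> [uF eJ]]]]|[e aeF eJ]]; first by exists e; rewrite // addrC addKr.
by exists e, (a - e); rewrite addrC subrK.
Qed.

Lemma full_subr_corner (R : pzRingType) (a e : R) : corner_in_J e ->
  full (a - e) <->
  (forall P, Velt (a - 1) P -> Velt e P) /\
  (forall P, Velt e P -> max_ideal P /\ ~ Velt a P).
Proof.
move=> eJ; rewrite full_no_max_ideal; split=> [noP|[Va1_Ve Ve_Va] P mP Pae].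
  split=> P /VeltE [mP Px].
  - apply/VeltE; split=> //; case: (max_ideal_corner mP eJ) => // P1e.
    case: (noP P mP); have -> : a - e = (a - 1) + (1 - e) by rewrite addrA subrK.
    by case: mP => [[_ [PD _]] _]; apply: PD.
  - by split=> // /VeltE [_ Pa]; apply: (noP P mP); apply: idealB mP.1 Pa Px.
have [IP _] := mP; have [_ [PD _]] := IP.
have Pe : P e.
  case: (max_ideal_corner mP eJ) => // P1e.
  have Pa1 : P (a - 1) by have := idealB IP Pae P1e; rewrite opprB addrA subrK.
  by have /VeltE [] : Velt e P by apply/Va1_Ve/VeltE.
have Pa : P a by rewrite -(subrK e a); apply: PD.
have [_ nVa] : max_ideal P /\ ~ Velt a P by apply/Ve_Va/VeltE.
by apply/nVa/VeltE.
Qed.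

Theorem lemma2p2 (R : pzRingType) (a : R) :
  feckly_clean a <->
  exists e : R,
    (forall P : R -> Prop, Velt (a - 1) P -> Velt e P) /\
    (forall P : R -> Prop, Velt e P -> max_ideal P /\ ~ Velt a P) /\
    corner_in_J e.
Proof.
rewrite feckly_cleanE; split=> [[e aeF eJ]|[e [Va1_Ve [Ve_Va eJ]]]].
  by exists e; rewrite -and_assoc -full_subr_corner.
by exists e => //; apply/full_subr_corner.
Qed.
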